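(* Let $m\geq 1$ and $0\leq k\leq m$ be integers, and let $H$ be $\mathrm{Sym}(m)$ or $\mathrm{Alt}(m)$ acting on the set of $k$-element subsets of $\{1,\ldots,m\}$. Let $g\in H$ and suppose that, in its natural action on $\{1,\ldots,m\}$, $g$ has a cycle $C$ of length $m'$. Then for every integer $k'$ with $0\le k'\le m'$, the $k$-subsets of $\{1,\ldots,m\}$ that contain exactly $k'$ elements of $C$ lie in at least $\binom{m'}{k'}/m'$ distinct cycles of $g$ in its action on $k$-subsets.
   Context: A ''cycle of $g$'' on a set means an orbit of $\langle g\rangle$ on that set (fixed points count as cycles of length $1$). *)

From mathcomp Require Import all_boot all_order all_algebra all_fingroup all_solvable alt.
Set Implicit Arguments. Unset Strict Implicit. Unset Printing Implicit Defensive.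

Definition nat_cycle (m : nat) (g : {perm 'I_m}) (x : 'I_m) : {set 'I_m} :=
  orbit 'P <[g]> x.

Definition set_cycle (m : nat) (g : {perm 'I_m}) (A : {set 'I_m}) : {set {set 'I_m}} :=
  orbit 'P^* <[g]> A.

Definition ksub_meeting (m k k' : nat) (C : {set 'I_m}) : {set {set 'I_m}} :=
  [set A : {set 'I_m} | (#|A| == k) && (#|A :&: C| == k')].

From mathcomp Require Import all_boot all_order all_algebra all_fingroup all_solvable alt.
Import GRing.Theory Num.Theory.
Set Implicit Arguments. Unset Strict Implicit. Unset Printing Implicit Defensive.

(* Since g^m' fixes the cycle C pointwise, the traces A :&: C of the sets A in
   one g-cycle on subsets are among the m' sets g^i (A0 :&: C), i < m'.  Every
   k'-subset of C is such a trace of some k-set meeting C in exactly k' points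
   (pad it with k - k' points outside C), so the C(m', k') subsets of C of size
   k' are covered by the traces of the cycles, at most m' per cycle. *)

Lemma card_bigcup_le (I T : finType) (P : {pred I}) (F : I -> {set T}) :
  #|\bigcup_(i in P) F i| <= \sum_(i in P) #|F i|.
Proof.
elim/big_rec2: _ => [|i n U _ leUn]; first by rewrite cards0.
by rewrite (leq_trans (leq_card_setU _ _)) ?leq_add2l.
Qed.

Lemma setI_extend_outside (T : finType) (C B : {set T}) k :
  B \subset C -> #|B| <= k -> k - #|B| <= #|~: C| ->
  exists2 A : {set T}, #|A| = k & A :&: C = B.
Proof.
move=> sBC le_Bk le_pad.
have [D] : exists D, D \in [set D : {set T} | D \subset ~: C & #|D| == k - #|B|].
  by apply/card_gt0P; rewrite cards_draws bin_gt0.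
rewrite inE => /andP[sDC /eqP cardD].
have dDC : [disjoint D & C] by rewrite disjoints_subset.
have BD0 : B :&: D = set0.
  by apply/disjoint_setI0/(disjointWl sBC); rewrite disjoint_sym.
exists (B :|: D); first by rewrite cardsU BD0 cards0 subn0 cardD subnKC.
by rewrite setIUl (disjoint_setI0 dDC) setU0; apply/setIidPl.
Qed.

Section PermCycle.

Variables (T : finType) (g : {perm T}) (x : T).
Local Open Scope group_scope.
Local Notation C := (porbit g x).

Lemma porbit_expg_mod i y : y \in C -> (g ^+ (i %% #|C|)) y = (g ^+ i) y.
Proof.
rewrite -eq_porbit_mem => /eqP <-.
have fix_y : (g ^+ #|porbit g y|) y = y by rewrite permX iter_porbit.
rewrite {2}(divn_eq i #|porbit g y|) expgD (mulnC (i %/ _)) expgM permM.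
by rewrite (permX_fix _ fix_y).
Qed.

Lemma imset_expg_porbit i : (g ^+ i) @: C = C.
Proof.
apply/eqP; rewrite eqEcard card_imset ?leqnn ?andbT; last exact: perm_inj.
apply/subsetP=> _ /imsetP[y Cy ->].
by rewrite -eq_porbit_mem in Cy; rewrite -(eqP Cy) mem_porbit.
Qed.

Lemma setI_imset_expg_porbit i (A : {set T}) :
  (g ^+ i) @: A :&: C = (g ^+ i) @: (A :&: C).
Proof.
by rewrite imsetI ?imset_expg_porbit //; apply: in2W; apply: perm_inj.
Qed.

Lemma card_setI_porbit_orbit (A : {set T}) :
  #|[set B :&: C | B in orbit 'P^* <[g]> A]| <= #|C|.
Proof.
have C_gt0 : 0 < #|C| by rewrite lt0n card_porbit_neq0.
pose trace (i : 'I_#|C|) := (g ^+ i) @: (A :&: C).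
apply: (@leq_trans #|[set trace i | i : 'I_#|C|]|); last first.
  by rewrite (leq_trans (leq_imset_card _ _)) // card_ord.
apply/subset_leq_card/subsetP=> _ /imsetP[_ /orbitP[_ /cycleP[i ->] <-] ->].
apply/imsetP; exists (Ordinal (ltn_pmod i C_gt0)) => //.
apply: (@etrans _ _ ((g ^+ i) @: A :&: C)).
  by congr (_ :&: _); apply: eq_imset.
rewrite setI_imset_expg_porbit; apply: eq_in_imset => y /setIP[_ Cy].
by rewrite porbit_expg_mod.
Qed.

End PermCycle.

Lemma nat_cycleE (m : nat) (g : {perm 'I_m}) x : nat_cycle g x = porbit g x.
Proof. by rewrite porbit.unlock. Qed.

Theorem lemma3p1 (m k : nat) (H : {set {perm 'I_m}}) (g : {perm 'I_m})
    (x : 'I_m) (m' k' : nat) :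
  (1 <= m)%N -> (k <= m)%N ->
  (H = ('Sym_('I_m))%g \/ H = ('Alt_('I_m))%g) ->
  g \in H ->
  #|nat_cycle g x| = m' ->
  (k' <= m')%N -> (k' <= k)%N -> (k - k' <= m - m')%N ->
  (('C(m', k')%:R / m'%:R : rat) <=
     #|[set set_cycle g A | A in ksub_meeting k k' (nat_cycle g x)]|%:R)%R.
Proof.
move=> _ _ _ _ card_C _ le_k'k le_out.
rewrite nat_cycleE in card_C *.
set C := porbit g x in card_C *; set Q := [set set_cycle g A | A in _].
have m'_gt0 : (0 < m')%N by rewrite -card_C lt0n card_porbit_neq0.
have cover_draws : [set B : {set 'I_m} | B \subset C & #|B| == k'] \subset
                   \bigcup_(O in Q) [set A :&: C | A in O].
  apply/subsetP=> B; rewrite inE => /andP[sBC /eqP card_B].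
  have le_Bk : #|B| <= k by rewrite card_B.
  have le_pad : k - #|B| <= #|~: C|.
    by rewrite card_B -(addKn #|C| #|~: C|) cardsC card_ord card_C.
  have [A card_A AC_B] := setI_extend_outside sBC le_Bk le_pad.
  apply/bigcupP; exists (set_cycle g A); last first.
    by apply/imsetP; exists A; rewrite ?orbit_refl.
  by apply/imsetP; exists A; rewrite // inE card_A AC_B card_B !eqxx.
have : ('C(m', k') <= #|Q| * m')%N.
  rewrite -card_C -cards_draws (leq_trans (subset_leq_card cover_draws)) //.
  rewrite (leq_trans (card_bigcup_le _ _)) // -sum_nat_const leq_sum // => O.
  by case/imsetP=> A _ ->; apply: card_setI_porbit_orbit.
by rewrite ler_pdivrMr ?ltr0n // -natrM ler_nat.
Qed.
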